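(* For every $\lambda>0$, the function $F_\lambda(e)=F(\lambda,e)$ is strictly convex on $I_\lambda$; indeed $\partial_{ee}^2F(\lambda,e)>0$ for all $e\in I_\lambda$.
   Context: Let $\gamma>0$; let $a_1,\dots,a_p>0$ with weights $\omega_i>0$, $\sum_i\omega_i=1$, and $b_1,\dots,b_n>0$ with weights $\pi_j>0$, $\sum_j\pi_j=1$; put $a^*=\max_i a_i$, $b^*=\max_j b_j$. Define $G(e)=\sum_{j=1}^n\frac{b_j\pi_j}{1+\gamma b_j e}$, $J=\{e: e>-1/(\gamma b^* )\}$, and for $\lambda>0$, $I_\lambda=\{e\in J: G(e)<\lambda/a^*\}$. Define $F(\lambda,e)=e-\sum_{i=1}^p\frac{a_i\omega_i}{a_iG(e)-\lambda}$. *)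

From Stdlib Require Import Reals.
Open Scope R_scope.

Fixpoint rsum (n : nat) (f : nat -> R) : R :=
  match n with
  | O => 0
  | S k => rsum k f + f k
  end.

(* rmax n f = max_{i<n} f i  (meaningful for n >= 1) *)
Fixpoint rmax (n : nat) (f : nat -> R) : R :=
  match n with
  | O => f O
  | S k => Rmax (rmax k f) (f k)
  end.

Definition Gfun (gamma : R) (n : nat) (b pi : nat -> R) (e : R) : R :=
  rsum n (fun j => b j * pi j / (1 + gamma * b j * e)).

Definition inJ (gamma : R) (n : nat) (b : nat -> R) (e : R) : Prop :=
  e > - / (gamma * rmax n b).

Definition inI (gamma : R) (p n : nat) (a b pi : nat -> R) (lam e : R) : Prop :=
  inJ gamma n b e /\ Gfun gamma n b pi e < lam / rmax p a.

Definition Ffun (gamma : R) (p n : nat) (a omega b pi : nat -> R) (lam e : R) : R :=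
  e - rsum p (fun i => a i * omega i / (a i * Gfun gamma n b pi e - lam)).

(* Write c_i = a_i omega_i and psi_i(u) = c_i / (lambda - a_i u), so that
   F(lambda, e) = e + sum_i psi_i (G e).  On I_lambda every a_i G(e) lies below
   lambda, where each psi_i is increasing and convex; and on J every denominator
   1 + gamma b_j e of G is positive, where G is a positive combination of
   reciprocals of affine functions, hence strictly convex.  Both convexity
   statements reduce to the strict convexity of u |-> 1/u on (0, +oo).

   The theorem
   follows: the chord inequality termwise, and F'' = sum_i psi_i''(G) G'^2 +
   psi_i'(G) G'', a sum of positive terms. *)
From Stdlib Require Import Reals Lra Psatz.
From Coquelicot Require Import Coquelicot.
Open Scope R_scope.

Lemma rsum_ext n f g : (forall k, (k < n)%nat -> f k = g k) -> rsum n f = rsum n g.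
Proof.
  induction n as [|n IH]; intros Hfg; simpl; [reflexivity|].
  rewrite IH, Hfg; auto.
Qed.

Lemma rsum_le n f g : (forall k, (k < n)%nat -> f k <= g k) -> rsum n f <= rsum n g.
Proof.
  induction n as [|n IH]; intros Hfg; simpl; [lra|].
  assert (rsum n f <= rsum n g) by (apply IH; auto).
  assert (f n <= g n) by auto. lra.
Qed.

Lemma rsum_lt n f g : (1 <= n)%nat -> (forall k, (k < n)%nat -> f k < g k) ->
  rsum n f < rsum n g.
Proof.
  destruct n as [|n]; intros Hn Hfg; [lia|]. simpl.
  assert (rsum n f <= rsum n g) by (apply rsum_le; intros; apply Rlt_le; auto).
  assert (f n < g n) by auto. lra.
Qed.

Lemma rsum_pos n f : (1 <= n)%nat -> (forall k, (k < n)%nat -> 0 < f k) -> 0 < rsum n f.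
Proof.
  intros Hn Hf.
  assert (Hzero : forall m, rsum m (fun _ => 0) = 0)
    by (induction m as [|m IH]; simpl; [|rewrite IH]; lra).
  rewrite <- (Hzero n). apply rsum_lt; auto.
Qed.

Lemma rsum_lin n t s f g :
  rsum n (fun k => t * f k + s * g k) = t * rsum n f + s * rsum n g.
Proof. induction n as [|n IH]; simpl; [|rewrite IH]; ring. Qed.

Lemma rsum_opp n f : rsum n (fun k => - f k) = - rsum n f.
Proof. induction n as [|n IH]; simpl; [|rewrite IH]; ring. Qed.

Lemma rsum_eq1_nonempty n w : rsum n w = 1 -> (1 <= n)%nat.
Proof. destruct n; simpl; intros; [lra|lia]. Qed.

Lemma rmax_ge n f i : (i < n)%nat -> f i <= rmax n f.
Proof.
  induction n as [|n IH]; intros Hi; [lia|]. simpl.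
  destruct (Nat.eq_dec i n) as [->|Hne].
  - apply Rmax_r.
  - eapply Rle_trans; [apply IH; lia|apply Rmax_l].
Qed.

Lemma rsum_derive n (f : nat -> R -> R) (df : nat -> R) x :
  (forall k, (k < n)%nat -> is_derive (f k) x (df k)) ->
  is_derive (fun y => rsum n (fun k => f k y)) x (rsum n df).
Proof.
  induction n as [|n IH]; intros Hf; simpl.
  - apply (is_derive_const (V := R_NormedModule)).
  - apply (is_derive_plus (fun y => rsum n (fun k => f k y)) (f n)); auto.
Qed.

Lemma inv_jensen_gap X Y t : 0 < X -> 0 < Y -> 0 < t < 1 ->
  t / X + (1 - t) / Y - / (t * X + (1 - t) * Y)
  = t * (1 - t) * (X - Y) ^ 2 / (X * Y * (t * X + (1 - t) * Y)).
Proof.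
  intros HX HY Ht. assert (0 < t * X + (1 - t) * Y) by nra.
  field; repeat split; lra.
Qed.

Lemma inv_convex X Y t : 0 < X -> 0 < Y -> 0 < t < 1 ->
  / (t * X + (1 - t) * Y) <= t / X + (1 - t) / Y.
Proof.
  intros HX HY Ht. pose proof (inv_jensen_gap X Y t HX HY Ht) as Hgap.
  assert (0 < X * Y * (t * X + (1 - t) * Y))
    by (repeat apply Rmult_lt_0_compat; nra).
  assert (0 < / (X * Y * (t * X + (1 - t) * Y))) by (apply Rinv_0_lt_compat; lra).
  assert (0 <= t * (1 - t) * (X - Y) ^ 2 / (X * Y * (t * X + (1 - t) * Y))).
  { pose proof (pow2_ge_0 (X - Y)). unfold Rdiv.
    apply Rmult_le_pos; [apply Rmult_le_pos; nra|lra]. }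
  lra.
Qed.

Lemma inv_strictly_convex X Y t : 0 < X -> 0 < Y -> 0 < t < 1 -> X <> Y ->
  / (t * X + (1 - t) * Y) < t / X + (1 - t) / Y.
Proof.
  intros HX HY Ht Hne. pose proof (inv_jensen_gap X Y t HX HY Ht) as Hgap.
  assert (0 < (X - Y) ^ 2) by (destruct (Rtotal_order X Y) as [|[|]]; [nra|contradiction|nra]).
  assert (0 < X * Y * (t * X + (1 - t) * Y))
    by (repeat apply Rmult_lt_0_compat; nra).
  assert (0 < t * (1 - t) * (X - Y) ^ 2 / (X * Y * (t * X + (1 - t) * Y)))
    by (apply Rdiv_lt_0_compat; [apply Rmult_lt_0_compat; nra|lra]).
  lra.
Qed.

(* A point W above the chord of two positive values has reciprocal below the
   chord of the reciprocals: 1/u is decreasing and convex. *)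
Lemma inv_above_chord U V W t : 0 < U -> 0 < V -> 0 < t < 1 ->
  t * U + (1 - t) * V < W -> / W < t / U + (1 - t) / V.
Proof.
  intros HU HV Ht HW.
  assert (HS : 0 < t * U + (1 - t) * V) by nra.
  assert (/ W < / (t * U + (1 - t) * V))
    by (apply Rinv_lt_contravar; [apply Rmult_lt_0_compat|]; lra).
  pose proof (inv_convex U V t HU HV Ht). lra.
Qed.

Lemma is_derive_chain_second (df g dg : R -> R) x ddf ddg :
  is_derive df (g x) ddf -> is_derive g x (dg x) -> is_derive dg x ddg ->
  is_derive (fun y => df (g y) * dg y) x (ddf * dg x ^ 2 + df (g x) * ddg).
Proof.
  intros Hdf Hg Hdg.
  pose proof (is_derive_comp df g x ddf (dg x) Hdf Hg) as Hcomp.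
  replace (ddf * dg x ^ 2 + df (g x) * ddg)
    with (plus (mult (scal (dg x) ddf) (dg x)) (mult (df (g x)) ddg))
    by (unfold plus, mult, scal; simpl; unfold mult; simpl; ring).
  apply (is_derive_mult (fun y => df (g y)) dg); [exact Hcomp|exact Hdg|].
  intros; apply Rmult_comm.
Qed.

Section InnerFunction.
Variables (gamma : R) (n : nat) (b pi : nat -> R).
Hypothesis hgamma : 0 < gamma.
Hypothesis hb : forall j, (j < n)%nat -> 0 < b j.
Hypothesis hpi : forall j, (j < n)%nat -> 0 < pi j.

Definition dG (e : R) : R :=
  rsum n (fun j => - (b j * pi j * (gamma * b j)) / (1 + gamma * b j * e) ^ 2).
Definition ddG (e : R) : R :=
  rsum n (fun j => 2 * (b j * pi j * (gamma * b j) ^ 2) / (1 + gamma * b j * e) ^ 3).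

(* On J all the denominators of G are positive, since b_j <= max b. *)
Lemma inJ_denominator_pos e j : inJ gamma n b e -> (j < n)%nat -> 0 < 1 + gamma * b j * e.
Proof.
  unfold inJ. intros He Hj.
  pose proof (rmax_ge n b j Hj). pose proof (hb j Hj).
  assert (HM : 0 < gamma * rmax n b) by (apply Rmult_lt_0_compat; lra).
  assert (HMe : -1 < gamma * rmax n b * e).
  { replace (-1) with (gamma * rmax n b * - / (gamma * rmax n b)) by (field; lra).
    apply Rmult_lt_compat_l; lra. }
  destruct (Rle_or_lt 0 e) as [He0|He0].
  - assert (0 <= gamma * b j * e) by (apply Rmult_le_pos; [apply Rmult_le_pos|]; lra).
    lra.
  - assert (0 <= (gamma * rmax n b - gamma * b j) * (- e))
      by (apply Rmult_le_pos; [apply Rmult_le_compat_l with (r := gamma) in H|]; lra).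
    nra.
Qed.

Lemma G_derive e : (forall j, (j < n)%nat -> 1 + gamma * b j * e <> 0) ->
  is_derive (Gfun gamma n b pi) e (dG e).
Proof.
  intros Hden. apply rsum_derive. intros j Hj. specialize (Hden j Hj).
  auto_derive; [exact Hden|]. field; auto.
Qed.

Lemma dG_derive e : (forall j, (j < n)%nat -> 1 + gamma * b j * e <> 0) ->
  is_derive dG e (ddG e).
Proof.
  intros Hden. apply rsum_derive. intros j Hj. specialize (Hden j Hj).
  auto_derive; [repeat apply Rmult_integral_contrapositive_currified; auto; lra|].
  field; auto.
Qed.

(* G'' > 0 on J: every term of G'' has a positive denominator there. *)
Lemma ddG_pos e : (1 <= n)%nat -> inJ gamma n b e -> 0 < ddG e.
Proof.
  intros Hn He. apply rsum_pos; auto. intros j Hj.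
  pose proof (inJ_denominator_pos e j He Hj). pose proof (hb j Hj). pose proof (hpi j Hj).
  apply Rdiv_lt_0_compat; [|apply pow_lt; lra].
  assert (0 < (gamma * b j) ^ 2) by (apply pow_lt, Rmult_lt_0_compat; lra).
  repeat apply Rmult_lt_0_compat; lra.
Qed.

(* G is strictly convex on J: each term is a positive multiple of the
   reciprocal of a positive affine function with nonzero slope. *)
Lemma G_strictly_convex x y t : (1 <= n)%nat -> inJ gamma n b x -> inJ gamma n b y ->
  x <> y -> 0 < t < 1 ->
  Gfun gamma n b pi (t * x + (1 - t) * y)
  < t * Gfun gamma n b pi x + (1 - t) * Gfun gamma n b pi y.
Proof.
  intros Hn Hx Hy Hxy Ht. unfold Gfun. rewrite <- rsum_lin. apply rsum_lt; auto.
  intros j Hj.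
  pose proof (inJ_denominator_pos x j Hx Hj) as HX.
  pose proof (inJ_denominator_pos y j Hy Hj) as HY.
  assert (Hslope : 0 < gamma * b j) by (apply Rmult_lt_0_compat; auto).
  assert (Hweight : 0 < b j * pi j) by (apply Rmult_lt_0_compat; auto).
  set (X := 1 + gamma * b j * x) in *. set (Y := 1 + gamma * b j * y) in *.
  replace (1 + gamma * b j * (t * x + (1 - t) * y)) with (t * X + (1 - t) * Y)
    by (unfold X, Y; ring).
  assert (HXY : X <> Y).
  { unfold X, Y. intro E. apply Hxy, (Rmult_eq_reg_l (gamma * b j)); lra. }
  pose proof (inv_strictly_convex X Y t HX HY Ht HXY) as Hinv.
  apply (Rmult_lt_compat_l (b j * pi j)) in Hinv; [|exact Hweight].
  unfold Rdiv in *. lra.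
Qed.
End InnerFunction.

(* The outer functions psi(u) = c / (lambda - a u) and their first two
   derivatives in u; F(lambda, .) is e plus a sum of psi_i o G. *)
Definition psi (c a lam u : R) : R := c / (lam - a * u).
Definition dpsi (c a lam u : R) : R := c * a / (lam - a * u) ^ 2.
Definition ddpsi (c a lam u : R) : R := 2 * c * a ^ 2 / (lam - a * u) ^ 3.

(* F(lambda, e) = e + sum_i psi_i(G e), valid everywhere (also where a
   denominator vanishes, both sides using / 0 = 0). *)
Lemma Ffun_psi gamma p n a omega b pi lam e :
  Ffun gamma p n a omega b pi lam e
  = e + rsum p (fun i => psi (a i * omega i) (a i) lam (Gfun gamma n b pi e)).
Proof.
  unfold Ffun. rewrite (rsum_ext p _ (fun i => - psi (a i * omega i) (a i) lam (Gfun gamma n b pi e))).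
  - rewrite rsum_opp. ring.
  - intros i _. unfold psi, Rdiv.
    replace (lam - a i * Gfun gamma n b pi e) with (- (a i * Gfun gamma n b pi e - lam)) by ring.
    rewrite Rinv_opp. ring.
Qed.

Lemma psi_derive c a lam u : lam - a * u <> 0 -> is_derive (psi c a lam) u (dpsi c a lam u).
Proof. intros H. unfold psi, dpsi. auto_derive; [exact H|]. field; auto. Qed.

Lemma dpsi_derive c a lam u : lam - a * u <> 0 -> is_derive (dpsi c a lam) u (ddpsi c a lam u).
Proof.
  intros H. unfold dpsi, ddpsi.
  auto_derive; [repeat apply Rmult_integral_contrapositive_currified; auto; lra|].
  field; auto.
Qed.

Lemma dpsi_pos c a lam u : 0 < c -> 0 < a -> a * u < lam -> 0 < dpsi c a lam u.
Proof. intros. unfold dpsi. apply Rdiv_lt_0_compat; [nra|apply pow_lt; lra]. Qed.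

Lemma ddpsi_pos c a lam u : 0 < c -> 0 < a -> a * u < lam -> 0 < ddpsi c a lam u.
Proof.
  intros. unfold ddpsi. apply Rdiv_lt_0_compat; [|apply pow_lt; lra].
  assert (0 < a ^ 2) by (apply pow_lt; lra). nra.
Qed.

(* psi is increasing and convex on {a u < lambda}: its value at a point strictly
   below a chord's abscissa lies strictly below that chord. *)
Lemma psi_below_chord c a lam u v w t : 0 < c -> 0 < a -> a * u < lam -> a * v < lam ->
  0 < t < 1 -> w < t * u + (1 - t) * v ->
  psi c a lam w < t * psi c a lam u + (1 - t) * psi c a lam v.
Proof.
  intros Hc Ha Hu Hv Ht Hw. unfold psi, Rdiv.
  assert (/ (lam - a * w) < t / (lam - a * u) + (1 - t) / (lam - a * v))
    by (apply inv_above_chord; nra).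
  unfold Rdiv in *. nra.
Qed.

(* On I_lambda every a_i G(e) lies below lambda, since a_i <= max a. *)
Lemma inI_below_lambda gamma p n a b pi lam e i : 0 < lam ->
  (forall i, (i < p)%nat -> 0 < a i) -> inI gamma p n a b pi lam e -> (i < p)%nat ->
  a i * Gfun gamma n b pi e < lam.
Proof.
  intros Hlam ha [_ He] Hi.
  pose proof (rmax_ge p a i Hi) as Hai. pose proof (ha i Hi).
  set (g := Gfun gamma n b pi e) in *.
  destruct (Rle_or_lt g 0) as [Hg|Hg].
  - assert (a i * g <= 0) by (apply Rmult_le_0_l; lra). lra.
  - assert (a i * g <= rmax p a * g) by (apply Rmult_le_compat_r; lra).
    assert (rmax p a * g < rmax p a * (lam / rmax p a)) by (apply Rmult_lt_compat_l; lra).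
    replace (rmax p a * (lam / rmax p a)) with lam in * by (field; lra). lra.
Qed.

Section OuterFunction.
Variables (gamma : R) (p n : nat) (a omega b pi : nat -> R) (lam : R).
Hypothesis hgamma : 0 < gamma.
Hypothesis ha : forall i, (i < p)%nat -> 0 < a i.
Hypothesis homega : forall i, (i < p)%nat -> 0 < omega i.
Hypothesis hb : forall j, (j < n)%nat -> 0 < b j.
Hypothesis hpi : forall j, (j < n)%nat -> 0 < pi j.
Hypothesis hlam : 0 < lam.

Let G := Gfun gamma n b pi.
Let c (i : nat) : R := a i * omega i.

Definition dF (e : R) : R :=
  1 + rsum p (fun i => dpsi (c i) (a i) lam (G e) * dG gamma n b pi e).
Definition ddF (e : R) : R :=
  rsum p (fun i => ddpsi (c i) (a i) lam (G e) * dG gamma n b pi e ^ 2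
                   + dpsi (c i) (a i) lam (G e) * ddG gamma n b pi e).

Lemma c_pos i : (i < p)%nat -> 0 < c i.
Proof. intros Hi. apply Rmult_lt_0_compat; auto. Qed.

Lemma inI_psi_regular e i : inI gamma p n a b pi lam e -> (i < p)%nat -> a i * G e < lam.
Proof. intros He Hi. now apply (inI_below_lambda gamma p n a b pi lam). Qed.

Lemma inI_G_regular e j : inI gamma p n a b pi lam e -> (j < n)%nat -> 1 + gamma * b j * e <> 0.
Proof.
  intros [HJ _] Hj. pose proof (inJ_denominator_pos gamma n b hgamma hb e j HJ Hj). lra.
Qed.

(* Strict convexity: G lies strictly below its chord, and each psi_i is
   increasing and convex below its pole. *)
Lemma Ffun_strictly_convex x y t : (1 <= p)%nat -> (1 <= n)%nat ->
  inI gamma p n a b pi lam x -> inI gamma p n a b pi lam y -> x <> y -> 0 < t < 1 ->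
  Ffun gamma p n a omega b pi lam (t * x + (1 - t) * y)
  < t * Ffun gamma p n a omega b pi lam x + (1 - t) * Ffun gamma p n a omega b pi lam y.
Proof.
  intros Hp Hn Hx Hy Hxy Ht. rewrite !Ffun_psi. fold G.
  pose proof (G_strictly_convex gamma n b pi hgamma hb hpi x y t Hn (proj1 Hx) (proj1 Hy) Hxy Ht).
  assert (rsum p (fun i => psi (c i) (a i) lam (G (t * x + (1 - t) * y)))
          < rsum p (fun i => t * psi (c i) (a i) lam (G x) + (1 - t) * psi (c i) (a i) lam (G y))).
  { apply rsum_lt; auto. intros i Hi.
    apply psi_below_chord; auto using c_pos, inI_psi_regular. }
  rewrite rsum_lin in *. unfold c in *. lra.
Qed.

Lemma Ffun_derive e : inI gamma p n a b pi lam e ->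
  is_derive (Ffun gamma p n a omega b pi lam) e (dF e).
Proof.
  intros He. unfold dF.
  apply (is_derive_ext (fun e => e + rsum p (fun i => psi (c i) (a i) lam (G e))));
    [intros; rewrite Ffun_psi; reflexivity|].
  apply (is_derive_plus (fun e => e) (fun e => rsum p (fun i => psi (c i) (a i) lam (G e))));
    [exact (is_derive_id (K := R_AbsRing) e)|].
  apply rsum_derive. intros i Hi. rewrite Rmult_comm.
  apply (is_derive_comp (psi (c i) (a i) lam) G).
  - apply psi_derive. pose proof (inI_psi_regular e i He Hi). lra.
  - apply G_derive. intros j Hj. now apply inI_G_regular.
Qed.

Lemma dF_derive e : inI gamma p n a b pi lam e -> is_derive dF e (ddF e).
Proof.
  intros He. unfold ddF. rewrite <- (Rplus_0_l (rsum p _)).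
  apply (is_derive_plus (fun _ => 1));
    [apply (is_derive_const (K := R_AbsRing) (V := R_NormedModule))|].
  apply rsum_derive. intros i Hi.
  apply (is_derive_chain_second (dpsi (c i) (a i) lam) G (dG gamma n b pi)).
  - apply dpsi_derive. pose proof (inI_psi_regular e i He Hi). lra.
  - apply G_derive. intros j Hj. now apply inI_G_regular.
  - apply dG_derive. intros j Hj. now apply inI_G_regular.
Qed.

(* Each term of F'' is positive: psi_i', psi_i'' > 0 below lambda, and G'' > 0. *)
Lemma ddF_pos e : (1 <= p)%nat -> (1 <= n)%nat -> inI gamma p n a b pi lam e -> 0 < ddF e.
Proof.
  intros Hp Hn He. apply rsum_pos; auto. intros i Hi.
  pose proof (ddG_pos gamma n b pi hgamma hb hpi e Hn (proj1 He)).
  pose proof (ddpsi_pos _ _ lam (G e) (c_pos i Hi) (ha i Hi) (inI_psi_regular e i He Hi)).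
  pose proof (dpsi_pos _ _ lam (G e) (c_pos i Hi) (ha i Hi) (inI_psi_regular e i He Hi)).
  pose proof (pow2_ge_0 (dG gamma n b pi e)).
  assert (0 < dpsi (c i) (a i) lam (G e) * ddG gamma n b pi e) by (apply Rmult_lt_0_compat; auto).
  assert (0 <= ddpsi (c i) (a i) lam (G e) * dG gamma n b pi e ^ 2) by (apply Rmult_le_pos; lra).
  lra.
Qed.
End OuterFunction.

Theorem lemma3p8 (gamma : R) (p n : nat) (a omega b pi : nat -> R)
  (hgamma : 0 < gamma)
  (ha : forall i, (i < p)%nat -> 0 < a i)
  (homega : forall i, (i < p)%nat -> 0 < omega i)
  (homega1 : rsum p omega = 1)
  (hb : forall j, (j < n)%nat -> 0 < b j)
  (hpi : forall j, (j < n)%nat -> 0 < pi j)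
  (hpi1 : rsum n pi = 1) :
  forall lam : R, 0 < lam ->
    (* strict convexity of F_lambda on I_lambda *)
    (forall x y t, inI gamma p n a b pi lam x -> inI gamma p n a b pi lam y ->
       x <> y -> 0 < t < 1 ->
       Ffun gamma p n a omega b pi lam (t * x + (1 - t) * y)
         < t * Ffun gamma p n a omega b pi lam x
           + (1 - t) * Ffun gamma p n a omega b pi lam y) /\
    (* the second derivative in e is positive on I_lambda *)
    (exists F1 : R -> R,
       (forall e, inI gamma p n a b pi lam e ->
          derivable_pt_lim (Ffun gamma p n a omega b pi lam) e (F1 e)) /\
       (forall e, inI gamma p n a b pi lam e ->
          exists F2e : R, derivable_pt_lim F1 e F2e /\ 0 < F2e)).
Proof.
  intros lam hlam.
  pose proof (rsum_eq1_nonempty p omega homega1) as Hp.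
  pose proof (rsum_eq1_nonempty n pi hpi1) as Hn.
  split.
  - intros x y t Hx Hy Hxy Ht.
    now apply Ffun_strictly_convex.
  - exists (dF gamma p n a omega b pi lam). split.
    + intros e He. apply is_derive_Reals. now apply Ffun_derive.
    + intros e He. exists (ddF gamma p n a omega b pi lam e). split.
      * apply is_derive_Reals. now apply dF_derive.
      * now apply ddF_pos.
Qed.
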